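(* Let $\mathbf{A}\in\mathbb{R}^{N\times N}$, $\mathbf{B}\in\mathbb{R}^{N\times m}$, $\mathbf{C}\in\mathbb{R}^{n\times N}$ define the discrete-time system $\mathbf{x}_k=\mathbf{A}\mathbf{x}_{k-1}+\mathbf{B}\mathbf{u}_k$, $\mathbf{y}_k=\mathbf{C}\mathbf{x}_k$, and let $0<s\le m$ be an integer. If the system is output $s$-sparse controllable, then $$\operatorname{rank}(\mathbf{C}\mathbf{W})=n\quad\text{and}\quad \max_{0\le i\le N-1}\frac{\sum_{j=0}^{i}R_j}{i+1}\le s.$$ Conversely, if $$\operatorname{rank}(\mathbf{C}\mathbf{W})=n\quad\text{and}\quad \min\Big\{m,\ \max_{0\le i\le N-1}R_i\Big\}\le s,$$ then the system is output $s$-sparse controllable.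
   Context: A vector in $\mathbb{R}^m$ is $s$-sparse if at most $s$ of its entries are nonzero. The system $(\mathbf{A},\mathbf{B},\mathbf{C})$ with $\mathbf{x}_k=\mathbf{A}\mathbf{x}_{k-1}+\mathbf{B}\mathbf{u}_k$, $\mathbf{y}_k=\mathbf{C}\mathbf{x}_k$ is called output $s$-sparse controllable if there exists an integer $0<K<\infty$ such that for every initial state $\mathbf{x}_0\in\mathbb{R}^N$ and every target $\mathbf{y}_f\in\mathbb{R}^n$ there exist $s$-sparse inputs $\mathbf{u}_1,\dots,\mathbf{u}_K\in\mathbb{R}^m$ with $\mathbf{y}_K=\mathbf{C}\sum_{k=1}^K\mathbf{A}^{K-k}\mathbf{B}\mathbf{u}_k+\mathbf{C}\mathbf{A}^K\mathbf{x}_0=\mathbf{y}_f$ (the supports of the $\mathbf{u}_k$ may differ across $k$). The controllability matrix is $\mathbf{W}=[\mathbf{A}^{N-1}\mathbf{B}\ \ \mathbf{A}^{N-2}\mathbf{B}\ \cdots\ \mathbf{B}]\in\mathbb{R}^{N\times Nm}$, and for integers $i\ge 0$, $R_i=\operatorname{rank}(\mathbf{C}\mathbf{A}^i\mathbf{W})-\operatorname{rank}(\mathbf{C}\mathbf{A}^{i+1}\mathbf{W})$. *)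

From HB Require Import structures.
From mathcomp Require Import all_boot all_order all_algebra.
From mathcomp Require Import reals.
Set Implicit Arguments. Unset Strict Implicit. Unset Printing Implicit Defensive.
Import Order.TTheory GRing.Theory Num.Theory.
Local Open Scope ring_scope.

Definition sparse {R : realType} {m : nat} (s : nat) (v : 'cV[R]_m) : bool :=
  (#|[set j : 'I_m | v j ord0 != 0%R]| <= s)%N.

(* Controllability matrix W = [A^(N-1) B, A^(N-2) B, ..., B] in R^(N x N m).
   Column index k (0 <= k < N m) lies in block k %/ m, column k %% m of it. *)
Lemma ord_modn_lt (N m : nat) (k : 'I_(N * m)) : (k %% m < m)%N.
Proof.
case: m k => [|m] k; last by rewrite ltn_mod.
have := ltn_ord k; move: (nat_of_ord k) => j; by rewrite muln0.
Qed.

Definition ctrb_mx {R : realType} {N m : nat}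
  (A : 'M[R]_N) (B : 'M[R]_(N, m)) : 'M[R]_(N, N * m) :=
  \matrix_(r < N, k < N * m)
     ((A ^+ (N.-1 - (k %/ m)) *m B) r (Ordinal (ord_modn_lt k))).

Definition Rdiff {R : realType} {N m n : nat}
  (A : 'M[R]_N) (B : 'M[R]_(N, m)) (C : 'M[R]_(n, N)) (i : nat) : int :=
  (\rank (C *m A ^+ i *m ctrb_mx A B))%:Z
  - (\rank (C *m A ^+ i.+1 *m ctrb_mx A B))%:Z.

(* Output s-sparse controllability of x_k = A x_{k-1} + B u_k, y_k = C x_k:
   there is 0 < K such that every x0, yf can be steered with s-sparse
   u_1..u_K (here u k' corresponds to u_{k'+1}, k' < K). *)
Definition output_sparse_controllable {R : realType} {N m n : nat}
  (A : 'M[R]_N) (B : 'M[R]_(N, m)) (C : 'M[R]_(n, N)) (s : nat) : Prop :=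
  exists K : nat, (0 < K)%N /\
    forall (x0 : 'cV[R]_N) (yf : 'cV[R]_n),
    exists u : 'I_K -> 'cV[R]_m,
      (forall k, sparse s (u k)) /\
      C *m (\sum_(k < K) A ^+ (K.-1 - k) *m B *m u k) + C *m A ^+ K *m x0 = yf.

From HB Require Import structures.
From mathcomp Require Import all_boot all_order all_algebra.
From mathcomp Require Import reals.
From mathcomp Require Import zify.
Import Order.TTheory GRing.Theory Num.Theory.
Local Open Scope ring_scope.
Set Implicit Arguments. Unset Strict Implicit. Unset Printing Implicit Defensive.

(* Let V_i be the column space of C A^i W, so that R_i = dim V_i - dim V_(i+1).
   By Cayley-Hamilton, V_i is spanned by the columns of C A^j B for all j >= i;
   hence V_i = col (C A^i B) + V_(i+1), and the chain V_0 >= V_1 >= ... is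
   constant from i = N on.  Inputs whose support at delay j (steps before the
   end) lies in S_j reach exactly the span of the selected columns of the
   C A^j B, called pattern_span below.
   - Necessity: there are finitely many support patterns, and a finite union of
     proper subspaces never covers R^n (moment-curve argument), so a single
     s-sparse pattern reaches everything.  Its columns at delays < i span at
     most s i dimensions, the others lie in V_i: n <= s i + dim V_i, which is
     R_0 + ... + R_(i-1) <= s i, and dim V_0 = n.
   - Sufficiency: if m <= s all columns can be used.  Otherwise, going down
     from delay N-1 to 0, greedily choose at most R_i <= s columns of C A^i B
     completing V_(i+1) to V_i; then V_N, still spanned at every delay >= N, is
     filled in with one column at a time at fresh delays beyond N. *)

Section FiniteCover.
Variable R : numFieldType.

Definition moment_row n (x : R) : 'rV[R]_n := \row_i x ^+ i.

(* A proper subspace meets fewer than n of the points moment_row k, k < M: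
   they are roots of a nonzero polynomial of degree < n. *)
Lemma moment_rows_in_proper_subspace n M (U : 'M[R]_n) :
  ~~ row_full U -> (#|[set k : 'I_M | moment_row n k%:R <= U]%MS| < n)%N.
Proof.
rewrite -cokermx_eq0 => coker_nz.
have [i [j coker_ij]] : exists i j, cokermx U i j != 0.
  have [/existsP[i /existsP[j ?]]|/existsPn all0] :=
    boolP [exists i, exists j, cokermx U i j != 0]; first by exists i, j.
  case/negP: coker_nz; apply/eqP/matrixP => i j; rewrite [RHS]mxE.
  by have /existsPn/(_ j)/negPn/eqP := all0 i.
pose q := \poly_(i0 < n) cokermx U (insubd i i0) j.
have q_nz : q != 0.
  apply: contra coker_ij => /eqP/(congr1 (fun p : {poly R} => p`_i)).
  by rewrite coef_poly ltn_ord valKd coef0 => ->.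
pose pts := [seq (val k)%:R : R | k <- enum [set k : 'I_M | moment_row n k%:R <= U]%MS].
have pts_roots : all (root q) pts.
  apply/allP => y /mapP[k + ->]; rewrite mem_enum inE submxE.
  move=> /eqP/matrixP/(_ 0 j); rewrite [RHS]mxE [LHS]mxE => qk0.
  rewrite /root horner_poly -[X in _ == X]qk0; apply/eqP.
  by apply: eq_bigr => i0 _; rewrite mulrC valKd [moment_row _ _ _ _]mxE.
have pts_uniq : uniq pts.
  rewrite map_inj_uniq ?enum_uniq // => k1 k2 /eqP; rewrite eqr_nat => /eqP.
  exact: val_inj.
have := max_poly_roots q_nz pts_roots pts_uniq.
by rewrite size_map -cardE => /leq_trans; apply; apply: size_poly.
Qed.

(* A finite family of subspaces covering R^n contains R^n itself: otherwise
   each member holds fewer than n of the #|F| * n + 1 moment points. *)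
Lemma finite_cover n (F : finType) (P : pred F) (U : F -> 'M[R]_n) :
  (forall z : 'rV[R]_n, exists2 f, P f & (z <= U f)%MS) ->
  exists2 f, P f & row_full (U f).
Proof.
move=> covers.
have [/existsP[f /andP[]]|/existsPn no_full] := boolP [exists f, P f && row_full (U f)].
  by exists f.
exfalso.
set M := (#|F| * n).+1.
pose hits f := [set k : 'I_M | moment_row n k%:R <= U f]%MS.
have : (M <= \sum_(f | P f) #|hits f|)%N.
  rewrite -[M in (M <= _)%N]card_ord -sum1_card.
  under [X in (_ <= X)%N]eq_bigr => f _ do rewrite -sum1_card.
  rewrite (exchange_big_dep predT) //=; apply: leq_sum => k _.
  have [f Pf kf] := covers (moment_row n k%:R).
  by rewrite (bigD1 f) // Pf inE.
apply/negP; rewrite -ltnNge ltnS.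
apply: leq_trans (_ : \sum_(f | P f) n <= _)%N.
  apply: leq_sum => f Pf; apply/ltnW/moment_rows_in_proper_subspace.
  by have := no_full f; rewrite Pf.
by rewrite sum_nat_const leq_mul2r max_card orbT.
Qed.

End FiniteCover.

Section PowerSpan.
Variables (F : fieldType) (N : nat) (A : 'M[F]_N).

(* Cayley-Hamilton: every power of A is a combination of 1, A, ..., A^(N-1),
   with the coefficients of the remainder of X^t modulo char_poly A. *)
Lemma expmx_lin_comb t :
  exists c : 'I_N -> F, A ^+ t = \sum_(i < N) c i *: A ^+ i.
Proof.
case: N A => [|N'] A'; first by exists (fun=> 0); rewrite [LHS]flatmx0 [RHS]flatmx0.
set q := 'X^t %% char_poly A'.
have cp_nz : char_poly A' != 0 by rewrite -size_poly_eq0 size_char_poly.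
have size_q : (size q <= N'.+1)%N.
  by have := ltn_modpN0 'X^t cp_nz; rewrite size_char_poly.
have Atq : A' ^+ t = horner_mx A' q.
  rewrite -{1}(horner_mx_X A') -rmorphXn /= {1}(divp_eq 'X^t (char_poly A')).
  by rewrite rmorphD rmorphM /= Cayley_Hamilton mulr0 add0r.
have q_poly : q = \poly_(i < N'.+1) q`_i.
  apply/polyP => i; rewrite coef_poly; case: ltnP => // /(leq_trans size_q) ?.
  exact: nth_default.
exists (fun i => q`_i); rewrite Atq {1}q_poly poly_def rmorph_sum /=.
by apply: eq_bigr => i _; rewrite linearZ /= rmorphXn /= horner_mx_X.
Qed.

(* Consequently each X A^t Y lies in the span of the X A^i Y, i < N; we work
   with row spaces, so the matrices are transposed. *)
Lemma expmx_span_sub p k (X : 'M[F]_(p, N)) (Y : 'M[F]_(N, k)) t :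
  ((X *m A ^+ t *m Y)^T <= \sum_(i < N) <<(X *m A ^+ i *m Y)^T>>)%MS.
Proof.
have [c ->] := expmx_lin_comb t.
rewrite mulmx_sumr mulmx_suml linear_sum /=; apply: summx_sub => i _.
rewrite -scalemxAr -scalemxAl linearZ /=; apply: scalemx_sub.
by rewrite (sumsmx_sup i) // genmxE.
Qed.

End PowerSpan.

Section IteratedChain.
Variables (F : fieldType) (p N : nat) (M : 'M[F]_N) (Y : nat -> 'M[F]_(p, N)).
Hypothesis Y_succ : forall i, Y i.+1 = Y i *m M.
Hypothesis Y1_sub : (Y 1 <= Y 0)%MS.

Lemma chain_dec i : (Y i.+1 <= Y i)%MS.
Proof.
elim: i => [//|i IHi].
by rewrite [Y i.+2]Y_succ [X in (_ <= X)%MS]Y_succ submxMr.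
Qed.

Lemma chain_stall i : (Y i <= Y i.+1)%MS -> forall k, (Y (i + k) <= Y (i + k).+1)%MS.
Proof.
move=> stall; elim=> [|k IHk]; first by rewrite addn0.
by rewrite addnS [Y (i + k).+2]Y_succ [X in (X <= _)%MS]Y_succ submxMr.
Qed.

Lemma chain_stable J : (N <= J)%N -> (Y N <= Y J)%MS.
Proof.
move=> NJ; have [/existsP[i stall]|/existsPn strict] :=
  boolP [exists i : 'I_N, Y i <= Y i.+1]%MS.
  rewrite -(subnKC NJ); elim: (J - N)%N => [|d IHd]; first by rewrite addn0.
  apply: submx_trans IHd _; rewrite addnS.
  have := chain_stall stall (N + d - i); rewrite subnKC //.
  by rewrite (leq_trans (ltnW (ltn_ord i)) (leq_addr _ _)).
have rank_drop i : (i <= N)%N -> (\rank (Y i) + i <= N)%N.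
  elim: i => [_|i IHi iN]; first by rewrite addn0 rank_leq_col.
  apply: leq_trans (IHi (ltnW iN)); rewrite addnS ltn_add2r.
  by rewrite rank_ltmx // ltmxE chain_dec (strict (Ordinal iN)).
have : \rank (Y N) = 0%N by apply/eqP; rewrite -leqn0 -(leq_add2r N) rank_drop.
by move/eqP; rewrite mxrank_eq0 => /eqP ->; rewrite sub0mx.
Qed.

End IteratedChain.

Section ControllabilityMatrix.
Variables (R : realType) (N m : nat) (A : 'M[R]_N) (B : 'M[R]_(N, m)).
Local Notation W := (ctrb_mx A B).

Lemma row_ctrb p (X : 'M[R]_(p, N)) (k : 'I_(N * m)) :
  row k (X *m W)^T = row (Ordinal (ord_modn_lt k)) (X *m A ^+ (N.-1 - k %/ m) *m B)^T.
Proof.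
apply/rowP => j; rewrite [LHS]mxE [RHS]mxE [LHS]mxE [RHS]mxE.
by rewrite -[in RHS]mulmxA !mxE; apply: eq_bigr => r _; rewrite !mxE.
Qed.

Lemma row_ctrb_block p (X : 'M[R]_(p, N)) (t : 'I_N) (l : 'I_m) :
  exists k : 'I_(N * m), row l (X *m A ^+ t *m B)^T = row k (X *m W)^T.
Proof.
have e_lt : (N.-1 - t < N)%N by have := ltn_ord t; lia.
have k_lt : ((N.-1 - t) * m + l < N * m)%N.
  apply: leq_trans (_ : (N.-1 - t).+1 * m <= _)%N; first by rewrite mulSnr ltn_add2l.
  by rewrite leq_mul2r e_lt orbT.
exists (Ordinal k_lt); rewrite row_ctrb /=.
have k_div : (((N.-1 - t) * m + l) %/ m = N.-1 - t)%N.
  by rewrite divnMDl ?divn_small ?addn0 // (leq_ltn_trans _ (ltn_ord l)).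
have -> : Ordinal (ord_modn_lt (Ordinal k_lt)) = l.
  by apply: val_inj; rewrite /= modnMDl modn_small.
by rewrite k_div subKn //; have := ltn_ord t; lia.
Qed.

Lemma ctrb_span p (X : 'M[R]_(p, N)) :
  ((X *m W)^T :=: \sum_(t < N) <<(X *m A ^+ t *m B)^T>>)%MS.
Proof.
apply/eqmxP/andP; split.
  apply/row_subP => k; rewrite row_ctrb.
  have e_lt : (N.-1 - k %/ m < N)%N.
    by case: N A B X k => [|N'] _ _ _ [k k_lt] /=; rewrite ?mul0n // ltnS leq_subr.
  by rewrite (sumsmx_sup (Ordinal e_lt)) // genmxE row_sub.
apply/sumsmx_subP => t _; rewrite genmxE; apply/row_subP => l.
by have [k ->] := row_ctrb_block X t l; apply: row_sub.
Qed.

Lemma ctrb_col_sub p (X : 'M[R]_(p, N)) t :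
  ((X *m A ^+ t *m B)^T <= (X *m W)^T)%MS.
Proof. by rewrite ctrb_span expmx_span_sub. Qed.

Lemma ctrb_invariant : ((A *m W)^T <= W^T)%MS.
Proof.
rewrite ctrb_span; apply/sumsmx_subP => t _; rewrite genmxE.
by have := ctrb_col_sub 1%:M t.+1; rewrite !mul1mx exprS.
Qed.

Lemma ctrb_stable J : (N <= J)%N -> ((A ^+ N *m W)^T <= (A ^+ J *m W)^T)%MS.
Proof.
apply: (chain_stable (M := A^T) (Y := fun i => (A ^+ i *m W)^T)) => [i|].
  by rewrite exprS -[A * _]/(A *m _) -mulmxA !trmx_mul.
by rewrite expr1 expr0 mul1mx ctrb_invariant.
Qed.

End ControllabilityMatrix.

Section RowMask.
Variables (F : fieldType) (m n : nat).
Implicit Types (S : {set 'I_m}) (M : 'M[F]_(m, n)).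

Definition indicator S : 'rV[F]_m := \row_l (l \in S)%:R.

Definition mask_rows S M : 'M[F]_(m, n) := diag_mx (indicator S) *m M.

Lemma row_mask l S M : row l (mask_rows S M) = if l \in S then row l M else 0.
Proof.
apply/rowP => j; rewrite /mask_rows mul_diag_mx !mxE.
by case: (l \in S); rewrite ?mul1r ?mul0r ?mxE.
Qed.

Lemma row_sub_mask l S M : l \in S -> (row l M <= mask_rows S M)%MS.
Proof. by move=> lS; have := row_sub l (mask_rows S M); rewrite row_mask lS. Qed.

Lemma mask_sub S M : (mask_rows S M <= M)%MS.
Proof. exact: submxMl. Qed.

Lemma mask_subset S1 S2 M : S1 \subset S2 -> (mask_rows S1 M <= mask_rows S2 M)%MS.
Proof.
move=> S12; apply/row_subP => l; rewrite row_mask.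
by case: ifP => [/(subsetP S12)/row_sub_mask //|_]; rewrite sub0mx.
Qed.

Lemma mask_setT M : (M <= mask_rows setT M)%MS.
Proof. by apply/row_subP => l; rewrite row_sub_mask ?inE. Qed.

Lemma mask_rank S M : (\rank (mask_rows S M) <= #|S|)%N.
Proof.
have [l0 l0S|S0] := pickP (mem S); last first.
  suff -> : mask_rows S M = 0 by rewrite mxrank0.
  by apply/row_matrixP => l; rewrite row_mask row0 [l \in S]S0.
apply: leq_trans (rank_leq_row (rowsub (@enum_val _ (mem S)) M)).
apply/mxrankS/row_subP => l; rewrite row_mask; case: ifP => lS; last by rewrite sub0mx.
by rewrite -(enum_rankK_in l0S lS) -row_rowsub row_sub.
Qed.

Lemma support_mul_indicator S (w : 'rV[F]_m) :
  (#|[set l | (w *m diag_mx (indicator S)) ord0 l != 0%R]| <= #|S|)%N.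
Proof.
apply/subset_leq_card/subsetP => l; rewrite !inE mul_mx_diag !mxE.
by case: (l \in S); rewrite ?mulr0 ?eqxx.
Qed.

Lemma mul_mask_support S (w : 'rV[F]_m) M :
  [set l | w ord0 l != 0%R] \subset S -> w *m mask_rows S M = w *m M.
Proof.
move=> /subsetP suppS; rewrite /mask_rows mulmxA; congr (_ *m _).
apply/rowP => l; rewrite mul_mx_diag !mxE.
have [lS|lS] := boolP (l \in S); first by rewrite mulr1.
rewrite mulr0; apply/esym/eqP; apply: contraR lS => w_l.
by apply: suppS; rewrite inE.
Qed.

Lemma rank_adds_lt p q (Y : 'M[F]_(p, n)) (X : 'M[F]_(q, n)) :
  ~~ (X <= Y)%MS -> (\rank Y < \rank (Y + X))%N.
Proof.
move=> XY; rewrite rank_ltmx // ltmxE addsmxSl /=.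
by apply: contra XY; apply: submx_trans (addsmxSr _ _).
Qed.

Lemma mask_complement p (Y : 'M[F]_(p, n)) M :
  exists S, (#|S| + \rank Y <= \rank (Y + M))%N /\ (M <= Y + mask_rows S M)%MS.
Proof.
suff: forall d p (Y : 'M[F]_(p, n)), (\rank (Y + M) - \rank Y <= d)%N ->
    exists S, (#|S| + \rank Y <= \rank (Y + M))%N /\ (M <= Y + mask_rows S M)%MS.
  by apply; apply: leqnn.
elim=> [|d IHd] {}p {}Y deficit; (have [MY|MY] := boolP (M <= Y)%MS;
  first by exists set0; rewrite cards0 mxrankS ?addsmxSl // (submx_trans MY) ?addsmxSl).
  by have := rank_adds_lt MY; lia.
have [l lY] : exists l, ~~ (row l M <= Y)%MS by apply/row_subPn.
set Y' := (Y + row l M)%MS.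
have rank_Y' : (\rank Y < \rank Y')%N := rank_adds_lt lY.
have eq_Y'M : (Y' + M :=: Y + M)%MS.
  apply/eqmxP/andP; split; rewrite !addsmx_sub.
    by rewrite addsmxSl addsmxSr (submx_trans (row_sub l M) (addsmxSr _ _)).
  by rewrite addsmxSr (submx_trans (addsmxSl _ _) (addsmxSl _ _)).
have deficit' : (\rank (Y' + M) - \rank Y' <= d)%N by rewrite eq_Y'M; lia.
have [S' []] := IHd _ Y' deficit'; rewrite eq_Y'M => card_S' MS'.
exists (l |: S'); split; first by rewrite cardsU1; move: (leq_b1 (l \notin S')); lia.
apply: submx_trans MS' _; rewrite !addsmx_sub addsmxSl /=.
rewrite !(submx_trans _ (addsmxSr _ _)) // ?row_sub_mask ?setU11 //.
by rewrite mask_subset // subsetUr.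
Qed.

End RowMask.
Arguments indicator {F m} S.

Section OutputSpaces.
Variables (R : realType) (N m n : nat).
Variables (A : 'M[R]_N) (B : 'M[R]_(N, m)) (C : 'M[R]_(n, N)).
Local Notation W := (ctrb_mx A B).

(* The rows of out_block j are the columns of C A^j B: the output directions
   produced by the input coordinates applied j steps before the end. *)
Definition out_block j : 'M[R]_(m, n) := (C *m A ^+ j *m B)^T.

Definition reach_space i : 'M[R]_(N * m, n) := (C *m A ^+ i *m W)^T.

Lemma out_blockE i t : (C *m A ^+ i *m A ^+ t *m B)^T = out_block (i + t).
Proof. by rewrite /out_block exprD -[A ^+ i * _]/(A ^+ i *m A ^+ t) mulmxA. Qed.

Lemma reach_space_span i : (reach_space i :=: \sum_(t < N) <<out_block (i + t)>>)%MS.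
Proof.
rewrite (eq_bigr (fun t : 'I_N => <<(C *m A ^+ i *m A ^+ t *m B)^T>>%MS)).
  exact: ctrb_span.
by move=> t _; rewrite out_blockE.
Qed.

(* Delays j >= i all contribute to reach_space i (Cayley-Hamilton). *)
Lemma out_block_sub i j : (i <= j)%N -> (out_block j <= reach_space i)%MS.
Proof. by move=> ij; rewrite -(subnKC ij) -out_blockE ctrb_col_sub. Qed.

Lemma reach_space_dec i : (reach_space i.+1 <= reach_space i)%MS.
Proof.
rewrite reach_space_span; apply/sumsmx_subP => t _.
by rewrite genmxE out_block_sub // (leq_trans (leqnSn i) (leq_addr _ _)).
Qed.

Lemma reach_space_rec i : (reach_space i :=: out_block i + reach_space i.+1)%MS.
Proof.
apply/eqmxP/andP; split; last by rewrite addsmx_sub out_block_sub ?reach_space_dec.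
rewrite reach_space_span; apply/sumsmx_subP => -[[|t] t_lt] _; rewrite genmxE /=.
  by rewrite addn0 addsmxSl.
by rewrite (submx_trans _ (addsmxSr _ _)) // out_block_sub // addnS ltnS leq_addr.
Qed.

Lemma reach_space_stable J : (N <= J)%N -> (reach_space N <= reach_space J)%MS.
Proof.
move=> NJ; rewrite /reach_space -!mulmxA !(trmx_mul C).
exact/submxMr/ctrb_stable.
Qed.

Lemma output_by_delay K (u : 'I_K -> 'cV[R]_m) :
  (C *m \sum_(k < K) A ^+ (K.-1 - k) *m B *m u k)^T =
  \sum_(j < K) (u (rev_ord j))^T *m out_block j.
Proof.
rewrite mulmx_sumr linear_sum (reindex_inj rev_ord_inj) /=.
apply: eq_bigr => j _; rewrite /out_block !mulmxA !trmx_mul /=.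
by have -> : (K.-1 - (K - j.+1) = j)%N by have := ltn_ord j; lia.
Qed.

(* The outputs reachable in T steps from x0 = 0 when the input applied j steps
   before the end is supported in S j. *)
Definition pattern_span T (S : nat -> {set 'I_m}) : 'M[R]_n :=
  (\sum_(j < T) <<mask_rows (S j) (out_block j)>>)%MS.

Lemma pattern_span_sup T S j :
  (j < T)%N -> (mask_rows (S j) (out_block j) <= pattern_span T S)%MS.
Proof. by move=> jT; rewrite /pattern_span (sumsmx_sup (Ordinal jT)) // genmxE. Qed.

Lemma pattern_span_mono T (S1 S2 : nat -> {set 'I_m}) :
  (forall j, (j < T)%N -> S1 j \subset S2 j) ->
  (pattern_span T S1 <= pattern_span T S2)%MS.
Proof.
move=> S12; apply/sumsmx_subP => j _; rewrite genmxE.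
exact/(submx_trans (mask_subset _ (S12 j (ltn_ord j))))/pattern_span_sup.
Qed.

Lemma pattern_span_widen T1 T2 S :
  (T1 <= T2)%N -> (pattern_span T1 S <= pattern_span T2 S)%MS.
Proof.
move=> T12; apply/sumsmx_subP => j _; rewrite genmxE.
exact/pattern_span_sup/(leq_trans (ltn_ord j)).
Qed.

Lemma pattern_span_split T S i :
  (pattern_span T S <= pattern_span i S + reach_space i)%MS.
Proof.
apply/sumsmx_subP => j _; rewrite genmxE.
have [ji|ij] := ltnP j i; first by rewrite (submx_trans _ (addsmxSl _ _)) ?pattern_span_sup.
by rewrite (submx_trans _ (addsmxSr _ _)) // (submx_trans (mask_sub _ _)) ?out_block_sub.
Qed.

Lemma pattern_span_rank T S : (\rank (pattern_span T S) <= \sum_(j < T) #|S j|)%N.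
Proof.
rewrite /pattern_span; elim/big_rec2: _ => [|j r M _ IH]; first by rewrite mxrank0.
apply: leq_trans (mxrank_adds_leqif _ _).1 _.
by rewrite genmxE leq_add ?mask_rank.
Qed.

Lemma pattern_controllable s T (S : nat -> {set 'I_m}) :
  (forall j, #|S j| <= s)%N -> row_full (pattern_span T S) ->
  output_sparse_controllable A B C s.
Proof.
move=> S_small full; exists T.+1; split => // x0 yf.
have /sub_sums_genmxP[w z_eq] : ((yf - C *m A ^+ T.+1 *m x0)^T <= pattern_span T.+1 S)%MS.
  exact/(submx_trans (submx_full _ full))/pattern_span_widen.
pose input (j : 'I_T.+1) := w j *m diag_mx (indicator (S j)).
exists (fun k => (input (rev_ord k))^T); split.
  move=> k; apply: leq_trans (S_small (rev_ord k)).
  apply: leq_trans (support_mul_indicator _ (w (rev_ord k))).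
  by apply/eq_leq/eq_card => l; rewrite !inE mxE.
rewrite -[yf](subrK (C *m A ^+ T.+1 *m x0)); congr (_ + _).
apply: trmx_inj; rewrite output_by_delay z_eq.
by apply: eq_bigr => j _; rewrite rev_ordK trmxK -mulmxA.
Qed.

(* Conversely, if every output can be reached by s-sparse inputs, then, the
   possible support patterns being finitely many, one pattern reaches all. *)
Lemma controllable_pattern s : output_sparse_controllable A B C s ->
  exists T (S : nat -> {set 'I_m}),
    (forall j, #|S j| <= s)%N /\ row_full (pattern_span T S).
Proof.
case=> -[|K] [] // _ ctrl.
pose by_delay (sg : {ffun 'I_K.+1 -> {set 'I_m}}) j := sg (inord j).
have [sg /forallP sg_small full] : exists2 sg : {ffun 'I_K.+1 -> {set 'I_m}},
    [forall j, #|sg j| <= s]%N & row_full (pattern_span K.+1 (by_delay sg)).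
  apply: finite_cover => z; have [u [u_sparse u_out]] := ctrl 0 z^T.
  exists [ffun j => [set l | u (rev_ord j) l ord0 != 0%R]].
    by apply/forallP => j; rewrite ffunE; apply: u_sparse.
  apply/sub_sums_genmxP; exists (fun j => (u (rev_ord j))^T).
  rewrite -[z]trmxK -u_out mulmx0 addr0 output_by_delay; apply: eq_bigr => j _.
  rewrite /by_delay inord_val ffunE mul_mask_support //.
  by apply/subsetP => l; rewrite !inE mxE.
by exists K.+1, (by_delay sg); split => // j; apply: sg_small.
Qed.

(* Rank count: with supports of size <= s, the first i delays contribute at
   most s i dimensions, the remaining ones lie in reach_space i. *)
Lemma pattern_rank_bound s T (S : nat -> {set 'I_m}) i :
  (forall j, #|S j| <= s)%N -> row_full (pattern_span T S) ->
  (n <= s * i + \rank (reach_space i))%N.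
Proof.
move=> S_small /eqP {1}<-; apply: leq_trans (mxrankS (pattern_span_split T S i)) _.
apply: leq_trans (mxrank_adds_leqif _ _).1 _; rewrite leq_add2r.
apply: leq_trans (pattern_span_rank i S) _.
apply: (@leq_trans (\sum_(j < i) s)%N); first exact: leq_sum.
by rewrite big_const_ord iter_addn_0.
Qed.

Lemma rank_reach_space0 : \rank (reach_space 0) = \rank (C *m W).
Proof. by rewrite mxrank_tr expr0 mulmx1. Qed.

Definition update (S : nat -> {set 'I_m}) i (Si : {set 'I_m}) j :=
  if j == i then Si else S j.

Lemma pattern_span_update T S i Si : S i = set0 ->
  (pattern_span T S <= pattern_span T (update S i Si))%MS.
Proof.
move=> Si0; apply: pattern_span_mono => j _; rewrite /update.
by case: eqP => [->|_]; rewrite ?Si0 ?sub0set.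
Qed.

Lemma pattern_span_update_sup T S i Si : (i < T)%N ->
  (mask_rows Si (out_block i) <= pattern_span T (update S i Si))%MS.
Proof. by move=> iT; have := pattern_span_sup (update S i Si) iT; rewrite /update eqxx. Qed.

Lemma head_pattern b :
  (forall j, (j < N)%N -> \rank (reach_space j) <= b + \rank (reach_space j.+1))%N ->
  forall i, (i <= N)%N -> exists S : nat -> {set 'I_m},
    [/\ forall j, (#|S j| <= b)%N, forall j, (j < i)%N -> S j = set0 &
        (reach_space i <= pattern_span N S + reach_space N)%MS].
Proof.
move=> drop_small i iN; rewrite -(subKn iN).
elim: (N - i)%N (leq_subr i N) => [|k IHk] kN.
  exists (fun=> set0); split=> [j|//|]; first by rewrite cards0.
  by rewrite subn0 addsmxSr.
set i' := (N - k.+1)%N; have i'_succ : i'.+1 = (N - k)%N by rewrite /i'; lia.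
have [S' [S'_small S'_empty S'_span]] := IHk (ltnW kN).
have [Si [Si_card Si_span]] := mask_complement (reach_space i'.+1) (out_block i').
have rank_i' : \rank (reach_space i'.+1 + out_block i') = \rank (reach_space i').
  by rewrite (reach_space_rec i') addsmxC.
exists (update S' i' Si); split.
- move=> j; rewrite /update; case: eqP => _ //.
  by have := drop_small i' (ltac:(rewrite /i'; lia)); lia.
- by move=> j ji'; rewrite /update (ltn_eqF ji') S'_empty // -i'_succ ltnW.
have S'_sub : (pattern_span N S' <= pattern_span N (update S' i' Si))%MS.
  by rewrite pattern_span_update // S'_empty // -i'_succ.
have succ_sub : (reach_space i'.+1 <= pattern_span N (update S' i' Si) + reach_space N)%MS.
  by rewrite i'_succ; apply: submx_trans S'_span (addsmxS S'_sub (submx_refl _)).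
rewrite reach_space_rec addsmx_sub succ_sub andbT.
rewrite (submx_trans Si_span) // addsmx_sub succ_sub /=.
by rewrite (submx_trans _ (addsmxSl _ _)) // pattern_span_update_sup // /i'; lia.
Qed.

(* Beyond delay N, every out_block still spans reach_space N, so reach_space N
   can be added to any X using one input coordinate at a time, each at a fresh
   delay >= J; at most n - rank X of them are needed. *)
Lemma tail_pattern d : forall (X : 'M[R]_n) J, (N <= J)%N -> (n <= d + \rank X)%N ->
  exists T (S : nat -> {set 'I_m}),
    [/\ forall j, (#|S j| <= 1)%N, forall j, (j < J)%N -> S j = set0 &
        (reach_space N <= X + pattern_span T S)%MS].
Proof.
elim: d => [|d IHd] X J NJ rank_X; (have [NX|NX] := boolP (reach_space N <= X)%MS;
  first by exists 0%N, (fun=> set0); split=> [j|//|]; rewrite ?cards0 ?(submx_trans NX) ?addsmxSl).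
  by case/negP: NX; apply: submx_full; rewrite /row_full eqn_leq rank_leq_col.
have [t Jt_X] : exists t : 'I_N, ~~ (out_block (J + t) <= X)%MS.
  apply/existsP; apply: contraR NX => /existsPn all_in.
  rewrite (submx_trans (reach_space_stable NJ)) // reach_space_span.
  by apply/sumsmx_subP => t _; rewrite genmxE; apply/negPn/all_in.
set j0 := (J + t)%N.
have [l l_X] : exists l, ~~ (row l (out_block j0) <= X)%MS by apply/row_subPn.
have NJ' : (N <= j0.+1)%N by rewrite /j0; lia.
have rank_lt := rank_adds_lt l_X.
have rank_X' : (n <= d + \rank (X + row l (out_block j0)))%N by lia.
have [T' [S' [S'_small S'_empty S'_span]]] := IHd _ _ NJ' rank_X'.
exists (maxn T' j0.+1), (update S' j0 [set l]); split.
- by move=> j; rewrite /update; case: eqP; rewrite ?cards1.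
- move=> j jJ; rewrite /update ltn_eqF ?S'_empty //; rewrite /j0; lia.
apply: (submx_trans S'_span); rewrite !addsmx_sub addsmxSl /=.
apply/andP; split; apply: submx_trans (addsmxSr _ _).
  rewrite (submx_trans (row_sub_mask _ (set11 l))) //.
  by rewrite pattern_span_update_sup // leq_max ltnSn orbT.
apply: submx_trans (pattern_span_update T' [set l] (S'_empty j0 (ltnSn j0))) _.
by rewrite pattern_span_widen // leq_maxl.
Qed.

Lemma drops_controllable s : (0 < s)%N -> \rank (C *m W) = n ->
  ((m <= s)%N \/ forall j, (j < N)%N ->
     (\rank (reach_space j) <= s + \rank (reach_space j.+1))%N) ->
  output_sparse_controllable A B C s.
Proof.
move=> s_pos rank_CW drops.
have full0 : (1%:M <= reach_space 0)%MS by rewrite sub1mx /row_full rank_reach_space0 rank_CW.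
case: drops => [ms|drop_small].
  apply: (@pattern_controllable s N (fun=> setT)) => [j|]; first by rewrite cardsT card_ord.
  rewrite -sub1mx (submx_trans full0) // reach_space_span.
  apply/sumsmx_subP => t _; rewrite genmxE add0n (submx_trans (mask_setT _)) //.
  exact: pattern_span_sup.
have [Sh [Sh_small _ Sh_span]] := head_pattern drop_small (leq0n N).
have [T [St [St_small St_empty St_span]]] :=
  @tail_pattern n 0 N (leqnn N) (ltac:(by rewrite mxrank0 addn0)).
pose S j := if (j < N)%N then Sh j else St j.
apply: (@pattern_controllable s (maxn N T) S) => [j|].
  by rewrite /S; case: ifP => _ //; apply: leq_trans (St_small j) s_pos.
rewrite -sub1mx (submx_trans full0) // (submx_trans Sh_span) // addsmx_sub.
apply/andP; split.
  apply: submx_trans (pattern_span_widen S (leq_maxl N T)).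
  by apply: pattern_span_mono => j jN; rewrite /S jN.
rewrite (submx_trans St_span) // addsmx_sub sub0mx /=.
apply: submx_trans (pattern_span_widen S (leq_maxr N T)).
apply: pattern_span_mono => j _; rewrite /S; case: ifP => // jN.
by rewrite St_empty ?sub0set.
Qed.

Lemma controllable_rank_bounds s : output_sparse_controllable A B C s ->
  \rank (C *m W) = n /\ forall i, (n <= s * i + \rank (reach_space i))%N.
Proof.
move=> /controllable_pattern[T [S [S_small full]]].
split=> [|i]; last exact: pattern_rank_bound S_small full.
apply/eqP; rewrite eqn_leq rank_leq_row -rank_reach_space0.
by have := pattern_rank_bound 0 S_small full; rewrite muln0.
Qed.

Lemma Rdiff_reach_space i :
  Rdiff A B C i = (\rank (reach_space i))%:Z - (\rank (reach_space i.+1))%:Z.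
Proof. by rewrite /Rdiff !mxrank_tr. Qed.

Lemma sum_Rdiff i : \rank (C *m W) = n ->
  \sum_(j < i) Rdiff A B C j = n%:Z - (\rank (reach_space i))%:Z.
Proof.
move=> rank_CW; elim: i => [|i IHi]; first by rewrite big_ord0 rank_reach_space0 rank_CW subrr.
by rewrite big_ord_recr /= IHi Rdiff_reach_space addrA subrK.
Qed.

End OutputSpaces.

Theorem theorem1 (R : realType) (N m n s : nat)
  (A : 'M[R]_N) (B : 'M[R]_(N, m)) (C : 'M[R]_(n, N)) :
  (0 < s)%N -> (s <= m)%N ->
  (output_sparse_controllable A B C s ->
     \rank (C *m ctrb_mx A B) = n /\
     \big[Num.max/0]_(i < N)
        (((\sum_(j < i.+1) Rdiff A B C j)%:~R : R) / (i.+1)%:R) <= s%:R)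
  /\
  ((\rank (C *m ctrb_mx A B) = n /\
    Num.min (m%:Z) (\big[Num.max/0]_(i < N) Rdiff A B C i) <= s%:Z) ->
     output_sparse_controllable A B C s).
Proof.
move=> s_pos _; split.
  move=> /controllable_rank_bounds[rank_CW bound]; split=> //.
  apply/bigmax_leP; split=> [|i _]; first by rewrite ler0n.
  rewrite sum_Rdiff // ler_pdivrMr ?ltr0Sn // -natrM.
  rewrite -[((s * i.+1)%N)%:R]/(((s * i.+1)%N%:Z)%:~R : R) ler_int.
  by have := bound i.+1; lia.
move=> [rank_CW]; rewrite ge_min => /orP[ms|/bigmax_leP[_ Rdiff_le]].
  by apply: drops_controllable => //; left; lia.
apply: drops_controllable => //; right => j jN.
have := Rdiff_le (Ordinal jN) isT; rewrite Rdiff_reach_space /=; lia.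
Qed.
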